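(* Let $E$ be a finite-dimensional real Euclidean space with translation space $V$, let $\Phi_{\mathrm{aff}}$ be an affine root system on $E$ with a basis $B$ (corresponding to a chamber), and let $J\subset B$ be such that $DJ$ is linearly independent. Let $\Phi'_{\mathrm{aff}}$ be an affine root subsystem of $\Phi_{\mathrm{aff}}$ containing $(\Phi_{\mathrm{aff}})_J$. Then there exists a basis of $\Phi'_{\mathrm{aff}}$ containing $J$.
   Context: Affine root systems are in the sense of Macdonald. For an affine root $a$, $Da\in V^*$ is its gradient: $a(x+v)=a(x)+(Da)(v)$; $DJ=\{Da\mid a\in J\}$. $(\Phi_{\mathrm{aff}})_J=\{a\in\Phi_{\mathrm{aff}}\mid Da\in\mathbb R\cdot DJ\}$. *)

From HB Require Import structures.
From mathcomp Require Import all_boot all_order all_algebra.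
From mathcomp Require Import all_classical all_reals all_analysis.
Set Implicit Arguments. Unset Strict Implicit. Unset Printing Implicit Defensive.
Import Order.TTheory GRing.Theory Num.Theory.
Import numFieldNormedType.Exports.
Local Open Scope classical_set_scope.
Local Open Scope ring_scope.

(* The Euclidean space E is modelled as R^n = 'rV[R]_n with the standard
   inner product (origin fixed; V = 'rV[R]_n is its translation space).
   An affine function a : E -> R is represented by its gradient a.1 (an
   element of V, identified with V^* through the inner product) and its
   value a.2 at the origin: a(x) = <x, a.1> + a.2. *)

Definition aff (R : realType) (n : nat) := ('rV[R]_n * R)%type.

Section AffineRoots.
Variables (R : realType) (n : nat).
Implicit Types (a b f : aff R n) (x : 'rV[R]_n) (S J : set (aff R n)).

Definition dotv (u v : 'rV[R]_n) : R := \sum_(i < n) u 0 i * v 0 i.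

Definition aff_eval a x : R := dotv x a.1 + a.2.

Definition grad a : 'rV[R]_n := a.1.

Definition cpair a b : R := 2 * dotv a.1 b.1 / dotv a.1 a.1.

Definition refl_aff a f : aff R n :=
  (f.1 - cpair a f *: a.1, f.2 - cpair a f * a.2).

Definition refl_pt a x : 'rV[R]_n :=
  x - (2 * aff_eval a x / dotv a.1 a.1) *: a.1.

Definition aff_span S f : Prop :=
  exists s : seq (aff R n), {in s, forall a, S a} /\
  exists k : nat -> R,
    f.1 = \sum_(i < size s) k i *: (nth (0, 0) s i).1 /\
    f.2 = \sum_(i < size s) k i * (nth (0, 0) s i).2.

Definition wfun (s : seq (aff R n)) : 'rV[R]_n -> 'rV[R]_n :=
  foldr (fun a g => refl_pt a \o g) id s.

Definition weyl S : set ('rV[R]_n -> 'rV[R]_n) :=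
  [set wfun s | s in [set s : seq (aff R n) | {in s, forall a, S a}]].

Definition acts_properly S : Prop :=
  forall K : set 'rV[R]_n, compact K ->
    finite_set [set w | weyl S w /\ exists2 x, K x & K (w x)].

(* Affine root system in the sense of Macdonald (AR1)-(AR4). *)
Definition is_aff_root_system S : Prop :=
  [/\ (forall a, S a -> a.1 != 0),
      (forall f, aff_span S f),
      (forall a b, S a -> S b -> S (refl_aff a b)),
      (forall a b, S a -> S b -> exists z : int, cpair a b = z%:~R)
    & acts_properly S].

Definition is_aff_root_subsystem S' S : Prop :=
  S' `<=` S /\ (forall a b, S' a -> S' b -> S' (refl_aff a b)).

Definition hyps S : set 'rV[R]_n := [set x | exists2 a, S a & aff_eval a x = 0].

Definition is_chamber S (C : set 'rV[R]_n) : Prop :=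
  exists2 x, (~` hyps S) x & C = connected_component (~` hyps S) x.

Definition is_wall a (C : set 'rV[R]_n) : Prop :=
  exists2 x, aff_eval a x = 0 &
    \forall y \near x, aff_eval a y = 0 -> closure C y.

Definition half a : aff R n := (2^-1 *: a.1, 2^-1 * a.2).

Definition chamber_basis S (C : set 'rV[R]_n) : set (aff R n) :=
  [set a | [/\ S a, ~ S (half a), (forall x, C x -> 0 < aff_eval a x)
             & is_wall a C]].

Definition is_basis S B : Prop :=
  exists2 C, is_chamber S C & B = chamber_basis S C.

Definition grad_lin_indep J : Prop :=
  forall s : seq (aff R n), uniq s -> {in s, forall a, J a} ->
  forall k : nat -> R,
    \sum_(i < size s) k i *: (nth (0, 0) s i).1 = 0 ->
    forall i, (i < size s)%N -> k i = 0.

Definition grad_span J (v : 'rV[R]_n) : Prop :=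
  exists s : seq (aff R n), {in s, forall a, J a} /\
  exists k : nat -> R, v = \sum_(i < size s) k i *: (nth (0, 0) s i).1.

Definition sub_J S J : set (aff R n) := [set a | S a /\ grad_span J (grad a)].

End AffineRoots.

From mathcomp Require Import all_boot all_order all_algebra.
From mathcomp Require Import all_classical all_reals all_analysis.
Import numFieldNormedType.Exports.
Local Open Scope classical_set_scope.
Local Open Scope ring_scope.

Set Implicit Arguments. Unset Strict Implicit. Unset Printing Implicit Defensive.
Import Order.TTheory GRing.Theory Num.Theory.

(* Removing roots removes hyperplanes, so the chamber C of Phi is contained in
   the chamber C' of Phi' through any point of C.  Every a in J lies in
   (Phi_aff)_J, hence in Phi'; since H_a misses the connected set C', the
   affine function a keeps on C' the positive sign it has on C, and H_a, a
   wall of C, is a fortiori a wall of the larger C'.  Thus J lies in the basis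
   of Phi' attached to C'. *)

Section ChamberBasisSubsystem.
Variables (R : realType) (n : nat).
Implicit Types (a : aff R n) (x : 'rV[R]_n) (S J : set (aff R n)).

Lemma dotv_continuous (v : 'rV[R]_n) : continuous (fun x => dotv x v).
Proof.
apply: continuous_big; first exact: add_continuous.
move=> i _ x.
by apply: (@continuousM R _ (fun y : 'rV[R]_n => y 0 i) (fun=> v 0 i));
  [exact: coord_continuous | exact: cst_continuous].
Qed.

Lemma aff_eval_continuous a : continuous (aff_eval a).
Proof.
move=> x; apply: (@continuousD _ R^o _ (fun y => dotv y a.1) (fun=> a.2)).
  exact: dotv_continuous.
exact: cst_continuous.
Qed.

Lemma hypsS S' S : S' `<=` S -> hyps S' `<=` hyps S.
Proof. by move=> sS' x [a /sS' Sa ax0]; exists a. Qed.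

Lemma component_hypsS S' S x :
  S' `<=` S -> (~` hyps S) x ->
  connected_component (~` hyps S) x `<=` connected_component (~` hyps S') x.
Proof.
move=> sS' Sx; apply: connected_component_max.
- exact: connected_component_refl.
- by move=> y /connected_component_sub Sy /(hypsS sS').
- exact: component_connected.
Qed.

Lemma aff_eval_gt0_connected S a (C : set 'rV[R]_n) x0 x :
  S a -> connected C -> C `<=` ~` hyps S ->
  C x0 -> 0 < aff_eval a x0 -> C x -> 0 < aff_eval a x.
Proof.
move=> Sa connC CS Cx0 ax0_gt0 Cx; rewrite ltNge; apply/negP => ax_le0.
have /connected_intervalP itvC : connected (aff_eval a @` C).
  apply: connected_continuous_connected => //.
  exact/continuous_subspaceT/aff_eval_continuous.
have [|y Cy ay0] := itvC _ _ (imageP _ Cx) (imageP _ Cx0) 0.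
  by rewrite /= ax_le0 ltW.
by apply: (CS y Cy); exists a.
Qed.

Lemma is_wallS a (C C' : set 'rV[R]_n) : C `<=` C' -> is_wall a C -> is_wall a C'.
Proof.
move=> CC' [x ax0 nearC]; exists x => //.
by apply: filterS nearC => y Cy /Cy; exact: closureS.
Qed.

Lemma grad_span_refl J a : J a -> grad_span J (grad a).
Proof.
move=> Ja; exists [:: a]; split; first by move=> b; rewrite inE => /eqP ->.
by exists (fun=> 1); rewrite big_ord1 scale1r.
Qed.

Lemma chamber_basis_subsystem S' S x0 a :
  S' `<=` S -> (~` hyps S) x0 -> S' a ->
  chamber_basis S (connected_component (~` hyps S) x0) a ->
  chamber_basis S' (connected_component (~` hyps S') x0) a.
Proof.
move=> sS' Sx0 S'a [Sa Shalf a_gt0 wall_a].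
have S'x0 : (~` hyps S') x0 by move/(hypsS sS').
split=> //.
- by move/sS'.
- move=> x; apply: (aff_eval_gt0_connected (x0 := x0) S'a).
  + exact: component_connected.
  + by move=> y /connected_component_sub.
  + exact: connected_component_refl.
  + exact/a_gt0/connected_component_refl.
- exact: is_wallS (component_hypsS sS' Sx0) wall_a.
Qed.

End ChamberBasisSubsystem.

Theorem corollaryA3 (R : realType) (n : nat) (Phi B J Phi' : set (aff R n)) :
  is_aff_root_system Phi -> is_basis Phi B -> J `<=` B -> grad_lin_indep J ->
  is_aff_root_subsystem Phi' Phi -> sub_J Phi J `<=` Phi' ->
  exists B', is_basis Phi' B' /\ J `<=` B'.
Proof.
move=> _ [_ [x0 Phix0 ->] ->] JB _ [sPhi' _] PhiJ.
have Phi'x0 : (~` hyps Phi') x0 by move/(hypsS sPhi').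
exists (chamber_basis Phi' (connected_component (~` hyps Phi') x0)).
split; first by exists (connected_component (~` hyps Phi') x0) => //; exists x0.
move=> a Ja; have Ba := JB a Ja.
have Phi'a : Phi' a by apply: PhiJ; split; [case: Ba | exact: grad_span_refl].
exact: chamber_basis_subsystem sPhi' Phix0 Phi'a Ba.
Qed.
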